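(* Let $A\in\mathbb{R}_+^{n\times n}$ be irreducible and let $x>0$ be a Perron eigenvector of $A$. Then $$\rho(A)=\max_{B\in\Omega(A)}\rho(B)\iff\big(\forall\,1\le i,j,k\le n:\ x_k<x_j\Rightarrow a_{i,k}\le a_{i,j}\big),$$ and $$\rho(A)=\min_{B\in\Omega(A)}\rho(B)\iff\big(\forall\,1\le i,j,k\le n:\ x_k<x_j\Rightarrow a_{i,k}\ge a_{i,j}\big).$$
   Context: For $A=(a_{i,j})\in\mathbb{R}_+^{n\times n}$ (nonnegative $n\times n$ matrices), $\Omega(A)=\{B\in\mathbb{R}_+^{n\times n}:\ \forall i\ \exists\text{ a permutation }\phi_i\text{ of }\{1,\dots,n\}\text{ with } b_{i,j}=a_{i,\phi_i(j)}\ \forall j\}$. $\rho(B)$ denotes the spectral radius (Perron root) of $B$. A Perron eigenvector of $A$ is a nonzero nonnegative vector $x$ with $Ax=\rho(A)x$. *)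

From HB Require Import structures.
From mathcomp Require Import all_boot all_order all_algebra all_fingroup.
From mathcomp Require Import complex.
Set Implicit Arguments. Unset Strict Implicit. Unset Printing Implicit Defensive.
Import Order.TTheory GRing.Theory Num.Theory.
Local Open Scope ring_scope.

Section Defs.
Variable R : rcfType.
Variable n : nat.

Definition nonneg_mx (A : 'M[R]_n) : Prop := forall i j, 0 <= A i j.

Definition eigenvalues (B : 'M[R]_n) : seq R[i] :=
  sval (closed_field_poly_normal
          (char_poly (map_mx (fun r : R => (r%:C)%C) B))).

(* Spectral radius: max modulus of the complex eigenvalues (0 if n = 0). *)
Definition spectral_radius (B : 'M[R]_n) : R :=
  \big[Num.max/0]_(z <- eigenvalues B) Normc.normc z.

Definition irreducible_mx (A : 'M[R]_n) : Prop :=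
  ~ exists S : {set 'I_n},
      [/\ S != set0, S != setT & forall i j, i \in S -> j \notin S -> A i j = 0].

Definition Omega (A B : 'M[R]_n) : Prop :=
  nonneg_mx B /\ forall i, exists phi : 'S_n, forall j, B i j = A i (phi j).

Definition perron_eigenvector (A : 'M[R]_n) (x : 'cV[R]_n) : Prop :=
  [/\ x != 0, forall i, 0 <= x i 0 & A *m x = spectral_radius A *: x].

End Defs.

(* If the ordering condition holds, the rearrangement inequality bounds
   (B x)_i = sum_c a_{i,phi_i(c)} x_c by (A x)_i = rho(A) x_i (or from below), and
   the Collatz-Wielandt bounds for the positive vector x turn B x <= rho(A) x into
   rho(B) <= rho(A) and B x >= rho(A) x into rho(B) >= rho(A).  If it fails at
   (i, j, k), exchanging a_{i,j} and a_{i,k} gives B with B x = rho(A) x + d e_i,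
   d != 0.  Since (1 + B)^(n-1) e_i > 0 by irreducibility and (1 + B)^(n-1)
   commutes with B, the vector z = (1 + B)^(n-1) x > 0 satisfies
   B z - rho(A) z = d (1 + B)^(n-1) e_i, whose entries all have the sign of d, and
   the strict Collatz-Wielandt bounds separate rho(B) from rho(A).
   The lower bound needs a large real eigenvalue: the largest real root r of the
   characteristic polynomial of a nonnegative B has u - B inverse-nonnegative for
   every u > r, which follows by induction on the size through a Schur complement. *)

From HB Require Import structures.
From mathcomp Require Import all_boot all_order all_algebra all_fingroup.
From mathcomp Require Import complex polyrcf ring lra.
Import Order.TTheory GRing.Theory Num.Theory.
Set Implicit Arguments. Unset Strict Implicit. Unset Printing Implicit Defensive.
Local Open Scope ring_scope.

Lemma horner_char_poly (F : comNzRingType) n (A : 'M[F]_n) a :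
  (char_poly A).[a] = \det (a%:M - A).
Proof.
symmetry; rewrite /char_poly /char_poly_mx /determinant horner_sum.
apply: eq_bigr => s _; rewrite hornerM horner_exp !hornerE; congr (_ * _).
rewrite (big_morph _ (fun p q => hornerM p q a) (hornerC 1 a)).
by apply: eq_bigr => i _; rewrite !mxE !(hornerE, hornerMn).
Qed.

Lemma det_block_schur (F : comUnitRingType) m1 m2 (a : 'M[F]_m1)
    (c : 'M_(m1, m2)) (b : 'M_(m2, m1)) (N : 'M_m2) :
  N \in unitmx -> \det (block_mx a c b N) = \det (a - c *m invmx N *m b) * \det N.
Proof.
move=> Nu; pose L := block_mx 1%:M 0 (- (invmx N *m b)) 1%:M.
have detL : \det L = 1 by rewrite det_lblock !det1 mulr1.
have : block_mx a c b N *m L = block_mx (a - c *m invmx N *m b) c 0 N.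
  rewrite mulmx_block !mulmx1 !mulmx0 ?addr0 ?add0r !mulmxN !mulmxA mulmxV // mul1mx.
  by rewrite subrr.
by move/(congr1 determinant); rewrite det_mulmx detL mulr1 det_ublock.
Qed.

Section RealPolynomials.
Variable R : rcfType.

Lemma horner_ge0_right (p : {poly R}) a :
  (forall u, a < u -> 0 <= p.[u]) -> 0 <= p.[a].
Proof.
move=> p_ge0; rewrite leNgt; apply/negP => pa_lt0.
have /(poly_cont a p) [d d_gt0 near_a] : 0 < - p.[a] by rewrite oppr_gt0.
have a_lt : a < a + d / 2%:R by rewrite ltrDl divr_gt0.
have : `|a + d / 2%:R - a| < d.
  by rewrite addrAC subrr add0r gtr0_norm ?divr_gt0 // ltr_pdivrMr // ltr_pMr // ltr1n.
move/near_a/(le_lt_trans (ler_norm _)); have := p_ge0 _ a_lt; lra.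
Qed.

Lemma monic_root_above (p : {poly R}) a : p \is monic -> p.[a] <= 0 ->
  exists r, [/\ a <= r, root p r & forall u, r < u -> 0 < p.[u]].
Proof.
move=> p_monic pa_le0; have p_neq0 := monic_neq0 p_monic.
have [N p_ge1] : exists N, forall u, N <= u -> 1 <= p.[u].
  by rewrite -(monicP p_monic); apply: poly_pinfty_gt_lc; rewrite (monicP p_monic).
have pN_gt0 u : 0 < p.[Num.max u N].
  by apply: lt_le_trans ltr01 (p_ge1 _ _); rewrite le_max lexx orbT.
have a_le : a <= Num.max a N by rewrite le_max lexx.
have [x0 /itvP x0_in x0_root] :=
  polyrcf.poly_ivt a_le (mulr_le0_ge0 pa_le0 (ltW (pN_gt0 a))).
pose r := \big[Num.max/x0]_(y <- rootsR p) y.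
have root_rootsR y : root p y = (y \in rootsR p).
  by have /roots_onP -> := roots_on_rootsR p_neq0.
exists r; split.
- by apply: le_trans (bigmax_ge_id _ _ _ _); rewrite x0_in.
- rewrite /r big_seq; apply: (big_ind (root p)) => // [y z ? ?|y].
    by rewrite maxElt; case: ifP.
  by rewrite root_rootsR.
move=> u r_lt_u.
have noroot_above : {in `]r, +oo[, forall y, ~~ root p y}.
  move=> y; rewrite in_itv /= andbT; apply: contraTN; rewrite root_rootsR => y_root.
  by rewrite -leNgt; apply: le_bigmax_seq.
have in_above y : r < y -> y \in `]r, +oo[ by rewrite in_itv /= andbT.
have uN_above : r < Num.max u N by rewrite lt_max r_lt_u.
have := polyrN0_itv noroot_above (in_above _ uN_above) (in_above _ r_lt_u).
by rewrite (gtr0_sg (pN_gt0 u)) => /eqP; rewrite sgr_cp0.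
Qed.

End RealPolynomials.

Local Notation moved phi := [set j | phi j != j].

Section Rearrangement.
Variables (R : realDomainType) (n : nat) (a x : 'I_n -> R).
Hypothesis similarly_ordered : forall j k, x k < x j -> a k <= a j.

Lemma similarly_ordered_top (D : {set 'I_n}) : D != set0 ->
  exists2 j0, j0 \in D & forall k, k \in D -> x k <= x j0 /\ a k <= a j0.
Proof.
case/set0Pn => d0 d0D.
have [k1 k1D x_max] := @arg_maxP _ _ _ d0 (fun j => j \in D) x d0D.
pose D' := [set j in D | x j == x k1].
have k1D' : k1 \in D' by rewrite inE k1D eqxx.
have [j0] := @arg_maxP _ _ _ k1 (fun j => j \in D') a k1D'.
rewrite inE => /andP [j0D /eqP xj0] a_max.
exists j0 => // k kD; rewrite xj0; split; first exact: x_max.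
have [xk|xk] := eqVneq (x k) (x k1); first by apply: a_max; rewrite inE kD xk eqxx.
by apply: similarly_ordered; rewrite xj0 lt_neqAle xk; exact: x_max.
Qed.

Lemma rearrangement_step (phi : 'S_n) : phi != 1%g ->
  exists2 psi : 'S_n, (#|moved psi| < #|moved phi|)%N &
    \sum_j a (phi j) * x j <= \sum_j a (psi j) * x j.
Proof.
move=> phi_neq1; set D := moved phi.
have D_neq0 : D != set0.
  apply: contra phi_neq1 => /eqP D0; apply/eqP/permP => j; rewrite perm1.
  have : j \notin D by rewrite D0 inE.
  by rewrite inE negbK => /eqP.
have [j0 j0D j0_top] := similarly_ordered_top D_neq0.
pose p := (phi^-1)%g j0; have phi_p : phi p = j0 by rewrite permKV.
have p_neq_j0 : p != j0 by apply: contraTneq j0D => p_j0; rewrite inE -{1}p_j0 phi_p eqxx.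
have pD : p \in D by rewrite inE phi_p eq_sym.
have phi_j0D : phi j0 \in D by move: j0D; rewrite !inE (inj_eq perm_inj).
pose t := tperm p j0; exists (t * phi)%g.
  have moved_sub : moved (t * phi)%g \subset D :\ j0.
    apply/subsetP => j; rewrite !inE permM.
    have [->|j_neq_j0] := eqVneq j j0; first by rewrite tpermR phi_p eqxx.
    have [->|j_neq_p] := eqVneq j p; first by move=> _; rewrite phi_p eq_sym p_neq_j0.
    by rewrite tpermD 1?eq_sym.
  exact: leq_ltn_trans (subset_leq_card moved_sub) (proper_card (properD1 j0D)).
have -> : \sum_j a ((t * phi)%g j) * x j = \sum_j a (phi j) * x (t j).
  rewrite (reindex_inj (@perm_inj _ t)) /=.
  by apply: eq_bigr => j _; rewrite permM tpermK.
rewrite -subr_ge0 -sumrB (bigD1 p) //= (bigD1 j0) 1?eq_sym //=.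
rewrite big1 => [|j /andP [j_neq_p j_neq_j0]]; last by rewrite tpermD 1?eq_sym // subrr.
rewrite tpermL tpermR phi_p addr0.
have [xp_le _] := j0_top _ pD; have [_ a_le] := j0_top _ phi_j0D.
have -> : a j0 * x j0 - a j0 * x p + (a (phi j0) * x p - a (phi j0) * x j0)
  = (a j0 - a (phi j0)) * (x j0 - x p) by ring.
by apply: mulr_ge0; rewrite subr_ge0.
Qed.

Lemma rearrangement_le (phi : 'S_n) :
  \sum_j a (phi j) * x j <= \sum_j a j * x j.
Proof.
elim: {phi}_.+1 {-2}phi (ltnSn #|moved phi|) => // N IH phi moved_lt.
have [->|phi_neq1] := eqVneq phi 1%g.
  by under eq_bigr do rewrite perm1.
have [psi moved_psi_lt sum_le] := rearrangement_step phi_neq1.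
exact: le_trans sum_le (IH _ (leq_trans moved_psi_lt _)).
Qed.

End Rearrangement.

Lemma rearrangement_ge (R : realDomainType) n (a x : 'I_n -> R) (phi : 'S_n) :
  (forall j k, x k < x j -> a j <= a k) ->
  \sum_j a j * x j <= \sum_j a (phi j) * x j.
Proof.
move=> oppositely_ordered; rewrite -lerN2 -!sumrN.
under eq_bigr do rewrite -mulNr; under [X in _ <= X]eq_bigr do rewrite -mulNr.
by apply: rearrangement_le => j k /oppositely_ordered; rewrite lerN2.
Qed.

Section Eigenvalues.
Variable R : rcfType.
Local Open Scope complex_scope.

Lemma normc_ge0 (z : R[i]) : 0 <= Normc.normc z.
Proof. by case: z => a b /=; rewrite sqrtr_ge0. Qed.

Lemma normc_real (r : R) : Normc.normc r%:C = `|r|.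
Proof. by rewrite /= expr0n /= addr0 sqrtr_sqr. Qed.

Lemma normc_sum_le n (c : 'I_n -> R) (w : 'I_n -> R[i]) :
  Normc.normc (\sum_j (c j)%:C * w j) <= \sum_j `|c j| * Normc.normc (w j).
Proof.
have normcE (z : R[i]) : `|z| = (Normc.normc z)%:C by case: z.
rewrite -lecR -normcE rmorph_sum; apply: le_trans (ler_norm_sum _ _ _) _.
by apply: ler_sum => j _; rewrite normrM !normcE normc_real rmorphM.
Qed.

Lemma eigenvalue_eigenvector n (B : 'M[R]_n) l : l \in eigenvalues B ->
  exists2 w : 'I_n -> R[i], (exists k, w k != 0) &
    forall k, \sum_j (B k j)%:C * w j = l * w k.
Proof.
rewrite /eigenvalues; set M := map_mx _ B.
case: closed_field_poly_normal => s Hs /= l_in_s.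
have : root (char_poly M) l.
  by rewrite Hs rootZ ?root_prod_XsubC // (monicP (char_poly_monic M)) oner_neq0.
rewrite /root horner_char_poly -det_tr => /det0P [v v_neq0].
rewrite linearB /= tr_scalar_mx mulmxBr mul_mx_scalar => /eqP.
rewrite subr_eq0 => /eqP vM.
exists (fun j => v 0 j).
  apply/existsP; apply: contraNT v_neq0; rewrite negb_exists => /forallP v0.
  by apply/eqP/matrixP => i j; rewrite (ord1 i) mxE; exact/eqP/negPn/v0.
move=> k; have := congr1 (fun u : 'rV[R[i]]_n => u 0 k) vM; rewrite !mxE => ->.
by apply: eq_bigr => j _; rewrite !mxE mulrC.
Qed.

Lemma real_root_eigenvalue n (B : 'M[R]_n) r :
  root (char_poly B) r -> r%:C \in eigenvalues B.
Proof.
move=> r_root; rewrite /eigenvalues; case: closed_field_poly_normal => s chiE /=.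
have := rmorph_root (real_complex R) r_root; rewrite map_char_poly chiE.
by rewrite rootZ ?root_prod_XsubC // (monicP (char_poly_monic _)) oner_neq0.
Qed.

Lemma subeigenvector_le n (B : 'M[R]_n) (z v : 'cV[R]_n) s t :
  nonneg_mx B -> (forall i, 0 < z i 0) -> (forall i, (B *m z) i 0 <= s * z i 0) ->
  (forall i, 0 <= v i 0) -> v != 0 -> (forall i, t * v i 0 <= (B *m v) i 0) ->
  t <= s.
Proof.
move=> B_ge0 z_gt0 Bz_le v_ge0 v_neq0 Bv_ge.
have [k1 vk1_gt0] : exists k, 0 < v k 0.
  case: (pickP (fun k => v k 0 != 0)) => [k vk_neq0|v0].
    by exists k; rewrite lt_def vk_neq0 v_ge0.
  by case/eqP: v_neq0; apply/matrixP => i j; rewrite (ord1 j) mxE; apply/eqP/negbFE/v0.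
pose ratio k := v k 0 / z k 0.
have [k0 _ ratio_max] := @arg_maxP _ _ _ k1 xpredT ratio isT.
set M := ratio k0 in ratio_max.
have M_gt0 : 0 < M by apply: lt_le_trans (ratio_max k1 isT); rewrite divr_gt0.
have v_le k : v k 0 <= M * z k 0 by rewrite -ler_pdivrMr //; exact: ratio_max.
have vk0 : v k0 0 = M * z k0 0 by rewrite /M /ratio divfK ?gt_eqF.
have Bv_le : (B *m v) k0 0 <= M * (B *m z) k0 0.
  rewrite !mxE mulr_sumr; apply: ler_sum => j _; rewrite mulrCA.
  exact: ler_wpM2l.
have : t * v k0 0 <= s * v k0 0.
  apply: le_trans (Bv_ge k0) (le_trans Bv_le _).
  by rewrite vk0 mulrCA; apply: ler_wpM2l; [exact: ltW | exact: Bz_le].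
by rewrite ler_pM2r // vk0 mulr_gt0.
Qed.

Lemma spectral_radius_le n (B : 'M[R]_n) (z : 'cV[R]_n) s :
  nonneg_mx B -> (forall i, 0 < z i 0) -> 0 <= s ->
  (forall i, (B *m z) i 0 <= s * z i 0) -> spectral_radius B <= s.
Proof.
move=> B_ge0 z_gt0 s_ge0 Bz_le; rewrite /spectral_radius big_seq.
apply: bigmax_le => // l /eigenvalue_eigenvector [w [k wk_neq0] Bw].
apply: (subeigenvector_le B_ge0 z_gt0 Bz_le (v := \col_j Normc.normc (w j))).
- by move=> i; rewrite mxE normc_ge0.
- apply: contra wk_neq0 => /eqP/matrixP/(_ k 0).
  by rewrite !mxE => /Normc.eq0_normc ->.
move=> i; rewrite !mxE -Normc.normcM -Bw; apply: le_trans (normc_sum_le _ _) _.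
by apply: ler_sum => j _; rewrite mxE ger0_norm.
Qed.

End Eigenvalues.

Section MonotoneMatrices.
Variable R : rcfType.

(* Collatz's monotone matrices: for invertible M, this says that M^-1 >= 0. *)
Definition monotone_mx n (M : 'M[R]_n) : Prop :=
  forall w : 'cV[R]_n, (forall i, 0 <= (M *m w) i 0) -> forall i, 0 <= w i 0.

Lemma block_monotone_mx m (a : 'M[R]_1) (c : 'rV[R]_m) (b : 'cV[R]_m)
    (N : 'M[R]_m) (y : 'cV[R]_m) :
  monotone_mx N -> N *m y = b -> (forall i, 0 <= y i 0) ->
  (forall j, 0 <= c 0 j) -> 0 < (a - c *m y) 0 0 ->
  monotone_mx (block_mx a (- c) (- b) N).
Proof.
move=> N_mono Ny y_ge0 c_ge0 schur_gt0 w.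
rewrite -[w]vsubmxK mul_block_col !mulNmx; set w0 := usubmx w; set w1 := dsubmx w.
set om := w0 0 0 => Mw_ge0.
have w0E : w0 = om%:M by exact: mx11_scalar.
pose v := w1 - om *: y.
have w1E : w1 = v + om *: y by rewrite /v subrK.
have v_ge0 : forall i, 0 <= v i 0.
  apply: N_mono => i; move: (Mw_ge0 (rshift 1 i)); rewrite col_mxEd.
  by rewrite /v mulmxBr -scalemxAr Ny w0E mul_mx_scalar addrC.
have cv_ge0 : 0 <= (c *m v) 0 0.
  by rewrite mxE; apply: sumr_ge0 => j _; apply: mulr_ge0.
have om_ge0 : 0 <= om.
  move: (Mw_ge0 (lshift m 0)); rewrite col_mxEu.
  have -> : (a *m w0 - c *m w1) 0 0 = om * (a - c *m y) 0 0 - (c *m v) 0 0.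
    by rewrite w1E mulmxDr -scalemxAr w0E mul_mx_scalar !mxE; ring.
  by rewrite subr_ge0 => /(le_trans cv_ge0); rewrite pmulr_lge0.
move=> i; case: (split_ordP i) => j ->.
  by rewrite col_mxEu (ord1 j).
by rewrite col_mxEd w1E mxE addr_ge0 ?v_ge0 // mxE mulr_ge0.
Qed.

Section DominantRootBlock.
Variables (m : nat) (b0 : 'M[R]_1) (c : 'rV[R]_m) (b : 'cV[R]_m) (B1 : 'M[R]_m).
Local Notation B := (block_mx b0 c b B1 : 'M_(1 + m)).
Hypothesis B_ge0 : nonneg_mx B.
Variable r1 : R.
Hypothesis B1_dominant : forall u, r1 < u ->
  0 < (char_poly B1).[u] /\ monotone_mx (u%:M - B1).

Lemma char_poly_block_schur u : r1 < u ->
  exists2 y : 'cV[R]_m, (forall i, 0 <= y i 0) &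
    (u%:M - B1) *m y = b /\
    (char_poly B).[u] = (u%:M - b0 - c *m y) 0 0 * (char_poly B1).[u].
Proof.
move=> r1_lt_u; have [chi1_gt0 N_mono] := B1_dominant r1_lt_u.
have N_unit : u%:M - B1 \in unitmx.
  by rewrite unitmxE unitfE -horner_char_poly gt_eqF.
have b_ge0 i : 0 <= b i 0 by have := B_ge0 (rshift 1 i) (lshift m 0); rewrite block_mxEdl.
exists (invmx (u%:M - B1) *m b); last split.
- by apply: N_mono => i; rewrite mulKVmx.
- by rewrite mulKVmx.
rewrite !horner_char_poly (scalar_mx_block 1 m u) opp_block_mx add_block_mx !add0r.
by rewrite det_block_schur // det_mx11 !mulNmx mulmxN opprK mulmxA.
Qed.

Lemma block_dominant_root : root (char_poly B1) r1 ->
  exists r, [/\ r1 <= r, root (char_poly B) r & forall u, r < u ->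
    0 < (char_poly B).[u] /\ monotone_mx (u%:M - B)].
Proof.
move=> r1_root.
have c_ge0 j : 0 <= c 0 j by have := B_ge0 (lshift m 0) (rshift 1 j); rewrite block_mxEur.
have cy_ge0 (y : 'cV[R]_m) : (forall i, 0 <= y i 0) -> 0 <= (c *m y) 0 0.
  by move=> y_ge0; rewrite mxE; apply: sumr_ge0 => j _; apply: mulr_ge0.
have schurE u (y : 'cV[R]_m) : (u%:M - b0 - c *m y) 0 0 = u - b0 0 0 - (c *m y) 0 0.
  by rewrite !mxE eqxx mulr1n.
(* q u = (c y) chi1(u) >= 0 above r1 by the Schur complement, and q r1 = - chi r1. *)
have chi_r1_le0 : (char_poly B).[r1] <= 0.
  pose q := ('X - (b0 0 0)%:P) * char_poly B1 - char_poly B.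
  have : 0 <= q.[r1].
    apply: horner_ge0_right => u r1_lt_u.
    have [y y_ge0 [_ chiE]] := char_poly_block_schur r1_lt_u.
    have [chi1_gt0 _] := B1_dominant r1_lt_u.
    rewrite /q !hornerE chiE schurE -mulrBl opprB addrC subrK.
    by rewrite mulr_ge0 ?cy_ge0 ?ltW.
  by rewrite /q !hornerE (rootP r1_root) mulr0 add0r oppr_ge0.
have [r [r1_le_r r_root chi_gt0]] := monic_root_above (char_poly_monic B) chi_r1_le0.
exists r; split => // u r_lt_u; split; first exact: chi_gt0.
have r1_lt_u : r1 < u by apply: le_lt_trans r_lt_u.
have [y y_ge0 [Ny chiE]] := char_poly_block_schur r1_lt_u.
have [chi1_gt0 N_mono] := B1_dominant r1_lt_u.
rewrite (scalar_mx_block 1 m u) opp_block_mx add_block_mx !add0r.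
apply: block_monotone_mx Ny y_ge0 c_ge0 _ => //.
by have := chi_gt0 _ r_lt_u; rewrite chiE pmulr_lgt0 // !mxE.
Qed.

End DominantRootBlock.

Lemma nonneg_mx_dominant_root m (B : 'M[R]_m.+1) : nonneg_mx B ->
  exists r, root (char_poly B) r /\
    forall u, r < u -> 0 < (char_poly B).[u] /\ monotone_mx (u%:M - B).
Proof.
elim: m B => [|m IH] B B_ge0.
  have chiE u : (char_poly B).[u] = u - B 0 0.
    by rewrite horner_char_poly det_mx11 !mxE eqxx mulr1n.
  exists (B 0 0); split => [|u u_gt]; first by rewrite /root chiE subrr.
  split=> [|w /(_ 0)]; first by rewrite chiE subr_gt0.
  by rewrite mxE big_ord1 !mxE eqxx mulr1n pmulr_rge0 ?subr_gt0 // => ? i; rewrite (ord1 i).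
pose B' : 'M[R]_(1 + m.+1) := B.
have B1_ge0 : nonneg_mx (drsubmx B') by move=> i j; rewrite !mxE; apply: B_ge0.
have [r1 [r1_root B1_dominant]] := IH _ B1_ge0.
have B'_ge0 : nonneg_mx (block_mx (ulsubmx B') (ursubmx B') (dlsubmx B') (drsubmx B')).
  by rewrite submxK.
have [r [_ r_root dominant]] := block_dominant_root B'_ge0 B1_dominant r1_root.
by exists r; rewrite submxK in r_root dominant.
Qed.

End MonotoneMatrices.

Section SpectralRadiusBounds.
Variable R : rcfType.

Lemma spectral_radius_ge m (B : 'M[R]_m.+1) (z : 'cV[R]_m.+1) s :
  nonneg_mx B -> (forall i, 0 < z i 0) ->
  (forall i, s * z i 0 <= (B *m z) i 0) -> s <= spectral_radius B.
Proof.
move=> B_ge0 z_gt0 Bz_ge; have [r [r_root dominant]] := nonneg_mx_dominant_root B_ge0.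
have s_le_r : s <= r.
  rewrite leNgt; apply/negP => /dominant [_ /(_ (- z)) z_le0].
  have /z_le0/(_ 0) : forall i, 0 <= ((s%:M - B) *m - z) i 0.
    move=> i; rewrite mulmxN mulmxBl mul_scalar_mx opprB !mxE subr_ge0.
    by have := Bz_ge i; rewrite mxE.
  by rewrite mxE oppr_ge0 leNgt z_gt0.
apply: le_trans s_le_r (le_trans (ler_norm r) _).
rewrite -normc_real /spectral_radius.
by apply: le_bigmax_seq => //; exact: real_root_eigenvalue.
Qed.

Lemma exists_uniform_gap (I : finType) (i0 : I) (f g h : I -> R) :
  (forall i, 0 < g i) -> (forall i, f i < h i) ->
  exists2 e, 0 < e & forall i, f i + e * g i <= h i.
Proof.
move=> g_gt0 f_lt_h; pose ratio i := (h i - f i) / g i.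
have [k _ ratio_min] := @arg_minP _ _ _ i0 xpredT ratio isT.
exists (ratio k); first by rewrite divr_gt0 ?subr_gt0.
by move=> i; rewrite -lerBrDl -ler_pdivlMr //; exact: ratio_min.
Qed.

Lemma spectral_radius_gt m (B : 'M[R]_m.+1) (z : 'cV[R]_m.+1) s :
  nonneg_mx B -> (forall i, 0 < z i 0) ->
  (forall i, s * z i 0 < (B *m z) i 0) -> s < spectral_radius B.
Proof.
move=> B_ge0 z_gt0 Bz_gt; have [e e_gt0 gap] := exists_uniform_gap 0 z_gt0 Bz_gt.
apply: lt_le_trans (spectral_radius_ge (s := s + e) B_ge0 z_gt0 _).
  by rewrite ltrDl.
by move=> i; rewrite mulrDl; exact: gap.
Qed.

Lemma spectral_radius_lt m (B : 'M[R]_m.+1) (z : 'cV[R]_m.+1) s :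
  nonneg_mx B -> (forall i, 0 < z i 0) ->
  (forall i, (B *m z) i 0 < s * z i 0) -> spectral_radius B < s.
Proof.
move=> B_ge0 z_gt0 Bz_lt; have [e e_gt0 gap] := exists_uniform_gap 0 z_gt0 Bz_lt.
have Bz_le i : (B *m z) i 0 <= (s - e) * z i 0.
  by rewrite mulrBl lerBrDr; exact: gap.
have Bz_ge0 : 0 <= (B *m z) 0 0.
  by rewrite mxE; apply: sumr_ge0 => j _; rewrite mulr_ge0 ?B_ge0 ?ltW.
have se_ge0 : 0 <= s - e by rewrite -(pmulr_lge0 _ (z_gt0 0)) (le_trans Bz_ge0).
apply: le_lt_trans (spectral_radius_le B_ge0 z_gt0 se_ge0 Bz_le) _.
by rewrite gtrBl.
Qed.

End SpectralRadiusBounds.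

Section Accessibility.
Variables (R : rcfType) (m : nat) (B : 'M[R]_m.+1).
Hypothesis B_ge0 : nonneg_mx B.

Lemma nonneg_mulmx (v : 'cV[R]_m.+1) :
  (forall i, 0 <= v i 0) -> forall i, 0 <= (B *m v) i 0.
Proof. by move=> v_ge0 i; rewrite mxE; apply: sumr_ge0 => j _; apply: mulr_ge0. Qed.

Lemma expr1D_mulmxS e (v : 'cV[R]_m.+1) :
  (1 + B) ^+ e.+1 *m v = (1 + B) ^+ e *m v + B *m ((1 + B) ^+ e *m v).
Proof. by rewrite exprS -mulmxE -mulmxA mulmxDl mul1mx. Qed.

Lemma expr1D_mulmx_ge (v : 'cV[R]_m.+1) : (forall i, 0 <= v i 0) ->
  forall e i, v i 0 <= ((1 + B) ^+ e *m v) i 0.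
Proof.
move=> v_ge0; elim=> [|e IH] i; first by rewrite expr0 mul1mx.
have v_e_ge0 l : 0 <= ((1 + B) ^+ e *m v) l 0 := le_trans (v_ge0 l) (IH l).
by rewrite expr1D_mulmxS mxE (le_trans (IH i)) // lerDl nonneg_mulmx.
Qed.

Variable i0 : 'I_m.+1.
Hypothesis edge_into : forall T : {set 'I_m.+1}, T != setT -> i0 \in T ->
  exists k j, [/\ k \notin T, j \in T & B k j != 0].

(* The support S e of (1 + B)^e e_i0 grows strictly until it is all of 'I_m.+1. *)
Lemma expr1D_delta_gt0 k : 0 < ((1 + B) ^+ m *m delta_mx i0 (0 : 'I_1)) k 0.
Proof.
pose v e := (1 + B) ^+ e *m delta_mx i0 (0 : 'I_1).
pose S e := [set l | 0 < v e l 0].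
have delta_ge0 l : 0 <= (delta_mx i0 (0 : 'I_1) : 'cV[R]_m.+1) l 0 by rewrite mxE ler0n.
have v_ge0 e l : 0 <= v e l 0 := le_trans (delta_ge0 l) (expr1D_mulmx_ge delta_ge0 e l).
have v_le e l : v e l 0 <= v e.+1 l 0.
  by rewrite /v expr1D_mulmxS [X in _ <= X]mxE lerDl; apply: nonneg_mulmx; exact: v_ge0.
have S_sub e : S e \subset S e.+1.
  by apply/subsetP => l; rewrite !inE => /lt_le_trans; apply; exact: v_le.
have i0S e : i0 \in S e.
  by rewrite inE (lt_le_trans _ (expr1D_mulmx_ge delta_ge0 e i0)) // mxE !eqxx.
have S_card e : (e <= m)%N -> (e < #|S e|)%N.
  elim: e => [|e IH] e_le; first by rewrite card_gt0; apply/set0Pn; exists i0.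
  have [S_full|S_part] := eqVneq (S e) setT.
    apply: leq_trans (subset_leq_card (S_sub e)).
    by rewrite S_full cardsT card_ord ltnS.
  have [l [j [lS jS Blj]]] := edge_into S_part (i0S e).
  have lS' : l \in S e.+1.
    have Bv_ge : B l j * v e j 0 <= (B *m v e) l 0.
      rewrite [X in _ <= X]mxE (bigD1 j) //=; apply: ler_wpDr => //.
      by apply: sumr_ge0 => i _; apply: mulr_ge0.
    have vej_gt0 : 0 < v e j 0 by move: jS; rewrite inE.
    rewrite inE /v expr1D_mulmxS -/(v e) [X in _ < X]mxE ltr_wpDl //.
    by apply: lt_le_trans Bv_ge; rewrite mulr_gt0 // lt_def Blj B_ge0.
  have proper_S : S e \proper S e.+1 by apply/properP; split; [exact: S_sub | exists l].
  exact: leq_ltn_trans (IH (ltnW e_le)) (proper_card proper_S).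
have : S m == setT by rewrite eqEcard subsetT cardsT card_ord S_card.
by move/eqP/setP/(_ k); rewrite !inE.
Qed.

End Accessibility.

Section SwapInRow.
Variable R : rcfType.

Lemma irreducible_mx_edge_into n (A : 'M[R]_n) (T : {set 'I_n}) :
  irreducible_mx A -> T != set0 -> T != setT ->
  exists k j, [/\ k \notin T, j \in T & A k j != 0].
Proof.
move=> A_irr T_neq0 T_neqT.
have [/existsP [k /existsP [j /and3P [kT jT Akj]]]|no_edge] :=
  boolP [exists k, exists j, [&& k \notin T, j \in T & A k j != 0]].
  by exists k, j.
case: A_irr; exists (~: T); split.
- by rewrite -setCT (inj_eq (@setC_inj _)).
- by rewrite -setC0 (inj_eq (@setC_inj _)).
move=> k j; rewrite !inE negbK => kT jT; apply/eqP.
move: no_edge; rewrite negb_exists => /forallP/(_ k).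
by rewrite negb_exists => /forallP/(_ j); rewrite kT jT /= negbK.
Qed.

Lemma Omega_mulmx n (A B : 'M[R]_n) (x : 'cV[R]_n) : Omega A B ->
  forall r, exists phi : 'S_n, (B *m x) r 0 = \sum_c A r (phi c) * x c 0.
Proof.
case=> _ rows r; have [phi Bphi] := rows r; exists phi.
by rewrite mxE; apply: eq_bigr => c _; rewrite Bphi.
Qed.

Definition swap_in_row n (A : 'M[R]_n) (i j k : 'I_n) : 'M[R]_n :=
  \matrix_(r, c) A r (if r == i then tperm j k c else c).

Lemma swap_in_row_Omega n (A : 'M[R]_n) i j k :
  nonneg_mx A -> Omega A (swap_in_row A i j k).
Proof.
move=> A_ge0; split=> [r c|r]; first by rewrite mxE.
exists (if r == i then tperm j k else 1%g) => c; rewrite mxE.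
by case: (r == i); rewrite ?perm1.
Qed.

Lemma swap_in_row_id n (A : 'M[R]_n) i j k r c :
  r != i -> swap_in_row A i j k r c = A r c.
Proof. by move=> r_neq_i; rewrite mxE (negPf r_neq_i). Qed.

Lemma mulmx_swap_in_row n (A : 'M[R]_n) (x : 'cV[R]_n) i j k : j != k ->
  swap_in_row A i j k *m x =
  A *m x + ((A i k - A i j) * (x j 0 - x k 0)) *: delta_mx i 0.
Proof.
move=> j_neq_k; apply/matrixP => r c; rewrite (ord1 c) !mxE.
have [->|r_neq_i] := eqVneq r i; last first.
  by rewrite mulr0 addr0; apply: eq_bigr => l _; rewrite swap_in_row_id.
rewrite /= mulr1 (reindex_inj (@perm_inj _ (tperm j k))) /=.
under eq_bigr do rewrite mxE eqxx tpermK.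
apply/eqP; rewrite -subr_eq0 opprD addrA -sumrB.
rewrite (bigD1 j) //= (bigD1 k) 1?eq_sym //= big1 => [|l /andP [l_neq_j l_neq_k]].
  by rewrite tpermL tpermR addr0; apply/eqP; ring.
by rewrite tpermD 1?eq_sym // subrr.
Qed.

Variables (m : nat) (A : 'M[R]_m.+1) (x : 'cV[R]_m.+1) (i j k : 'I_m.+1).
Hypotheses (A_ge0 : nonneg_mx A) (A_irr : irreducible_mx A).
Hypotheses (x_gt0 : forall r, 0 < x r 0) (Ax : A *m x = spectral_radius A *: x).
Hypothesis x_lt : x k 0 < x j 0.
Local Notation B := (swap_in_row A i j k).
Local Notation rho := (spectral_radius A).

Lemma swap_in_row_shift : exists z w : 'cV[R]_m.+1,
  [/\ forall r, 0 < z r 0, forall r, 0 < w r 0 &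
      B *m z = rho *: z + (A i k - A i j) *: w].
Proof.
have j_neq_k : j != k by apply: contraTneq x_lt => ->; rewrite ltxx.
have B_ge0 : nonneg_mx B := (swap_in_row_Omega i j k A_ge0).1.
pose P := (1 + B) ^+ m; pose d := delta_mx i (0 : 'I_1) : 'cV[R]_m.+1.
have edge_into T : T != setT -> i \in T ->
    exists k' j', [/\ k' \notin T, j' \in T & B k' j' != 0].
  move=> T_neqT iT; have T_neq0 : T != set0 by apply/set0Pn; exists i.
  have [k' [j' [k'T j'T Ak'j']]] := irreducible_mx_edge_into A_irr T_neq0 T_neqT.
  by exists k', j'; rewrite swap_in_row_id //; apply: contraNneq k'T => ->.
exists (P *m x), ((x j 0 - x k 0) *: (P *m d)); split.
- move=> r; apply: lt_le_trans (x_gt0 r) _.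
  by apply: expr1D_mulmx_ge => // l; apply: ltW.
- by move=> r; rewrite mxE mulr_gt0 ?subr_gt0 ?expr1D_delta_gt0.
have PB : B *m P = P *m B.
  by rewrite !mulmxE; apply/commrX/commrD; [exact: commr1 | exact: commr_refl].
rewrite mulmxA PB -mulmxA mulmx_swap_in_row // Ax mulmxDr -!scalemxAr.
by rewrite scalerA mulrC.
Qed.

Lemma swap_in_row_radius_gt : A i j < A i k -> rho < spectral_radius B.
Proof.
move=> A_lt; have [z [w [z_gt0 w_gt0 Bz]]] := swap_in_row_shift.
apply: spectral_radius_gt (swap_in_row_Omega i j k A_ge0).1 z_gt0 _ => r.
by rewrite Bz !mxE ltrDl mulr_gt0 ?subr_gt0.
Qed.

Lemma swap_in_row_radius_lt : A i k < A i j -> spectral_radius B < rho.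
Proof.
move=> A_lt; have [z [w [z_gt0 w_gt0 Bz]]] := swap_in_row_shift.
apply: spectral_radius_lt (swap_in_row_Omega i j k A_ge0).1 z_gt0 _ => r.
by rewrite Bz !mxE gtrDl pmulr_llt0 ?subr_lt0.
Qed.

End SwapInRow.

Theorem theorem3p4 (R : rcfType) (n : nat) (A : 'M[R]_n) (x : 'cV[R]_n) :
  nonneg_mx A -> irreducible_mx A ->
  perron_eigenvector A x -> (forall i, 0 < x i 0) ->
  ((forall B, Omega A B -> spectral_radius B <= spectral_radius A) <->
     (forall i j k : 'I_n, x k 0 < x j 0 -> A i k <= A i j))
  /\
  ((forall B, Omega A B -> spectral_radius A <= spectral_radius B) <->
     (forall i j k : 'I_n, x k 0 < x j 0 -> A i j <= A i k)).
Proof.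
move=> A_ge0 A_irr [x_neq0 _ Ax] x_gt0.
case: n A x A_ge0 A_irr x_neq0 Ax x_gt0 => [|m] A x A_ge0 A_irr x_neq0 Ax x_gt0.
  by rewrite flatmx0 eqxx in x_neq0.
have Axr r : \sum_c A r c * x c 0 = spectral_radius A * x r 0.
  by have := congr1 (fun v : 'cV[R]_m.+1 => v r 0) Ax; rewrite !mxE.
have rho_ge0 : 0 <= spectral_radius A.
  rewrite -(pmulr_lge0 _ (x_gt0 0)) -Axr; apply: sumr_ge0 => c _.
  by rewrite mulr_ge0 ?A_ge0 ?ltW.
split; split.
- move=> rho_max i j k x_lt; rewrite leNgt; apply/negP => A_lt.
  have := swap_in_row_radius_gt A_ge0 A_irr x_gt0 Ax x_lt A_lt.
  by rewrite ltNge rho_max //; exact: swap_in_row_Omega.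
- move=> ordered B B_Omega; apply: spectral_radius_le (B_Omega.1) x_gt0 rho_ge0 _ => r.
  have [phi ->] := Omega_mulmx x B_Omega r; rewrite -Axr.
  by apply: rearrangement_le => j k /ordered.
- move=> rho_min i j k x_lt; rewrite leNgt; apply/negP => A_lt.
  have := swap_in_row_radius_lt A_ge0 A_irr x_gt0 Ax x_lt A_lt.
  by rewrite ltNge rho_min //; exact: swap_in_row_Omega.
move=> ordered B B_Omega; apply: spectral_radius_ge (B_Omega.1) x_gt0 _ => r.
have [phi ->] := Omega_mulmx x B_Omega r; rewrite -Axr.
by apply: rearrangement_ge => j k /ordered.
Qed.
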